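(* There is an absolute constant $C>0$ such that for every prime power $q$, every positive integer $n$, and every alternating matrix space $\mathcal{A}\le\Lambda(n,\mathbb{F}_q)$, the number of maximal isotropic spaces of $\mathcal{A}$ is at most $q^{\frac{1}{6}n^2+Cn}$.
   Context: $\Lambda(n,\mathbb{F}_q)$ is the space of $n\times n$ alternating matrices over $\mathbb{F}_q$ (matrices $A$ with $v^tAv=0$ for all $v$). A subspace $U\le\mathbb{F}_q^n$ is an isotropic space of $\mathcal{A}$ if $u^tAu'=0$ for all $u,u'\in U$, $A\in\mathcal{A}$; it is maximal if no isotropic space of $\mathcal{A}$ properly contains it. *)

From HB Require Import structures.
From mathcomp Require Import all_boot all_order all_algebra all_field.
From Stdlib Require Import Reals.
Set Implicit Arguments. Unset Strict Implicit. Unset Printing Implicit Defensive.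
Import GRing.Theory.
Local Open Scope ring_scope.

Definition alternating (F : fieldType) (n : nat) (M : 'M[F]_n) : Prop :=
  forall v : 'cV[F]_n, v^T *m M *m v = 0.

Definition alt_space (F : fieldType) (n : nat) (A : {vspace 'M[F]_n}) : Prop :=
  forall M : 'M[F]_n, M \in A -> alternating M.

Definition isotropic (F : fieldType) (n : nat) (A : {vspace 'M[F]_n})
    (U : {vspace 'cV[F]_n}) : Prop :=
  forall u u' : 'cV[F]_n, u \in U -> u' \in U ->
  forall M : 'M[F]_n, M \in A -> u^T *m M *m u' = 0.

Definition max_isotropic (F : fieldType) (n : nat) (A : {vspace 'M[F]_n})
    (U : {vspace 'cV[F]_n}) : Prop :=
  isotropic A U /\
  forall U' : {vspace 'cV[F]_n}, isotropic A U' -> (U <= U')%VS -> U' = U.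

From HB Require Import structures.
From mathcomp Require Import all_boot all_order all_algebra all_field.
From mathcomp Require Import zify.
From Stdlib Require Import Reals Lra.
(* Re-import ssrnat so that m ^ e on nat denotes expn rather than Nat.pow. *)
From mathcomp Require Import ssrnat.
Set Implicit Arguments. Unset Strict Implicit. Unset Printing Implicit Defensive.
Import GRing.Theory.
Local Open Scope ring_scope.

(* Say Z is radical in W
   when Z <= W and Z is A-orthogonal to all of W; for such a pair we count the
   isotropic U with Z <= U <= W that are maximal inside W, and show that there
   are at most q ^ e(m) of them, where m >= dim W - dim Z and
   e(m) = (m^2 + 12 m) / 6.  Any v in W \ Z gives a smaller instance
   (W :&: v^perp, Z + <[v]>) whose solutions contain all old solutions
   containing v; its size drops by 1 + corank of v^perp in W.  Then:
   - if some v in W \ Z is orthogonal to all of W, every U contains it;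
   - otherwise, double counting pairs (v, U) with v in U, the spaces containing
     a vector of corank >= 2 are few (each such v saves 3), while in the
     remaining spaces all vectors have corank <= 1, which forces
     dim U >= (dim W + dim Z) / 2, so those spaces are large and again few.
   The theorem is the instance W = F^n, Z = 0, converted to a real bound. *)

Lemma dim_add_line (K : fieldType) (vT : vectType K) (Z : {vspace vT}) (v : vT) :
  v \notin Z -> \dim (Z + <[v]>) = (\dim Z).+1.
Proof.
move=> vZ; have v0 : v != 0 by apply: contraNneq vZ => ->; rewrite mem0v.
rewrite dimv_disjoint_sum ?dim_vline ?v0 ?addn1 //.
apply/vspaceP => x; rewrite memv_cap memv0.
apply/andP/eqP => [[xZ /vlineP[a xa]]|->]; last by rewrite !mem0v.
have [a0|a0] := eqVneq a 0; first by rewrite xa a0 scale0r.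
case/negP: vZ; have -> : v = a^-1 *: x by rewrite xa scalerA mulVf // scale1r.
exact: rpredZ.
Qed.

Definition bound_exp (m : nat) := ((m * m + 12 * m) %/ 6)%nat.

Lemma bound_exp_mono m1 m2 : (m1 <= m2)%nat -> (bound_exp m1 <= bound_exp m2)%nat.
Proof. by move=> le_m; apply/leq_div2r/leq_add; apply: leq_mul. Qed.

(* e(m) dominates the exponents of both recursive cases, with one to spare. *)
Lemma bound_exp_high m d : (1 <= d <= m)%nat -> (d + bound_exp (m - 3) < bound_exp m)%nat.
Proof. rewrite /bound_exp; nia. Qed.

Lemma bound_exp_low m d : (1 <= d <= m)%nat ->
  (d - (d + 1) %/ 2 + 1 + bound_exp (m - 2) < bound_exp m)%nat.
Proof. rewrite /bound_exp; nia. Qed.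

Lemma leq_add_pow q e a b : (1 < q)%nat -> (0 < e)%nat ->
  (a <= q ^ e.-1)%nat -> (b <= q ^ e.-1)%nat -> (a + b <= q ^ e)%nat.
Proof.
move=> q_gt1 e_gt0 aq bq; rewrite -(prednK e_gt0) expnS.
apply: leq_trans (leq_add aq bq) _; rewrite addnn -mul2n; exact: leq_mul.
Qed.

Section Vectors.
Variables (F : finFieldType) (n : nat).
Implicit Types (l : seq 'cV[F]_n) (x y v w u z : 'cV[F]_n) (U W Z : {vspace 'cV[F]_n}).

Lemma card_vspace_diff Z U :
  (Z <= U)%VS -> (\dim Z < \dim U)%nat ->
  (#|F| ^ (\dim U).-1 <= #|[pred v | (v \in U) && (v \notin Z)]|)%nat.
Proof.
move=> sZU ltZU; have q2 : (1 < #|F|)%nat := card_finNzRing_gt1 F.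
have splitU : #|U| = (#|[pred v | (v \in U) && (v \notin Z)]| + #|Z|)%nat.
  rewrite -(cardID Z U) addnC; congr (_ + _)%nat; apply: eq_card => x; rewrite !inE.
    by rewrite andbC.
  by case xZ: (x \in Z); rewrite ?andbT ?andbF ?(subvP sZU).
suff : (#|F| ^ (\dim U).-1 + #|Z| <= #|U|)%nat by rewrite splitU leq_add2r.
have dimU : \dim U = ((\dim U).-1).+1 by lia.
rewrite !card_vspace [in X in (_ <= X)%nat]dimU expnS.
have hZ : (#|F| ^ \dim Z <= #|F| ^ (\dim U).-1)%nat.
  by apply: leq_pexp2l; lia.
have hq : (2 * #|F| ^ (\dim U).-1 <= #|F| * #|F| ^ (\dim U).-1)%nat by apply: leq_mul.
by apply: leq_trans hq; rewrite mul2n -addnn leq_add2l.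
Qed.

Lemma double_count (T : seq {vspace 'cV[F]_n}) (P : pred 'cV[F]_n) (k b : nat) W :
  (forall U, U \in T -> (U <= W)%VS) ->
  (forall U, U \in T -> (k <= #|[pred v | (v \in U) && P v]|)%nat) ->
  (forall v, v \in W -> P v -> (count (fun U => v \in U) T <= b)%nat) ->
  (size T * k <= #|W| * b)%nat.
Proof.
move=> TW Tk vb.
have card_sum (Q : pred 'cV[F]_n) : #|[pred v | Q v]| = (\sum_v (Q v : nat))%nat.
  by rewrite -sum1_card big_mkcond; apply: eq_bigr => v _; rewrite inE; case: (Q v).
have -> : (size T * k = \sum_(U <- T) k)%nat.
  by rewrite big_const_seq count_predT iter_addn_0 mulnC.
apply: (@leq_trans (\sum_(U <- T) #|[pred v | (v \in U) && P v]|)).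
  by rewrite !big_seq; apply: leq_sum => U UT; apply: Tk.
under eq_bigr do rewrite card_sum.
rewrite exchange_big /=.
have -> : (#|W| * b = \sum_v ((v \in W) : nat) * b)%nat.
  by rewrite -big_distrl /= -card_sum.
apply: leq_sum => v _.
case Pv : (P v); last by rewrite big1 // => U _; rewrite andbF.
have -> : (\sum_(U <- T) ((v \in U) && true : nat) = count (fun U => v \in U) T)%nat.
  rewrite -sum1_count [RHS]big_mkcond.
  by apply: eq_bigr => U _; rewrite andbT; case: (v \in U).
case vW : (v \in W); first by rewrite mul1n vb.
rewrite mul0n leqn0 -[_ == 0%nat]negbK -lt0n -has_count; apply/hasP => -[U UT vU].
by move: vW; rewrite (subvP (TW U UT)).
Qed.

Definition vspace_of (P : pred 'cV[F]_n) : {vspace 'cV[F]_n} :=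
  <<[seq w <- enum 'cV[F]_n | P w]>>%VS.

Lemma mem_vspace_of (P : pred 'cV[F]_n) :
  P 0 -> (forall x y, P x -> P y -> P (x + y)) -> (forall a x, P x -> P (a *: x)) ->
  forall w, (w \in vspace_of P) = P w.
Proof.
move=> P0 PD PZ w; apply/idP/idP => [|Pw]; last first.
  by apply: memv_span; rewrite mem_filter Pw mem_enum.
rewrite /vspace_of; set s := [seq _ <- _ | _] => /(coord_span (X := in_tuple s)) ->.
apply: (big_ind P) => // i _; apply: PZ.
have : (in_tuple s)`_i \in s by apply: mem_nth; exact: ltn_ord.
by rewrite mem_filter => /andP[].
Qed.

Section Orthogonality.
Variable A : {vspace 'M[F]_n}.
Hypothesis altA : alt_space A.

Definition ortho x y : bool :=
  [forall M : 'M[F]_n, (M \in A) ==> (x^T *m M *m y == 0)].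

Lemma orthoP x y : reflect (forall M, M \in A -> x^T *m M *m y = 0) (ortho x y).
Proof.
apply: (iffP forallP) => [H M MA | H M]; first exact/eqP/(implyP (H M)).
by apply/implyP => MA; rewrite H.
Qed.

Lemma ortho0l y : ortho 0 y.
Proof. by apply/orthoP => M _; rewrite linear0 !mul0mx. Qed.

Lemma orthoDl x1 x2 y : ortho x1 y -> ortho x2 y -> ortho (x1 + x2) y.
Proof.
move=> /orthoP h1 /orthoP h2; apply/orthoP => M MA.
by rewrite linearD /= !mulmxDl h1 // h2 // addr0.
Qed.

Lemma orthoZl a x y : ortho x y -> ortho (a *: x) y.
Proof.
move=> /orthoP h; apply/orthoP => M MA.
by rewrite linearZ /= -!scalemxAl h // scaler0.
Qed.

Lemma orthoDl_eq x z y : ortho z y -> ortho (x + z) y = ortho x y.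
Proof.
move=> zy; apply/idP/idP => xy; last exact: orthoDl.
have -> : x = (x + z) + (-1) *: z by rewrite scaleN1r addrK.
exact/orthoDl/orthoZl.
Qed.

Lemma alt_skew M x y : M \in A -> x^T *m M *m y = - (y^T *m M *m x).
Proof.
move=> MA; have := altA MA (x + y).
rewrite !linearD /= !mulmxDl (altA MA x) (altA MA y) add0r addr0 addrC.
by move/eqP; rewrite addr_eq0 => /eqP.
Qed.

Lemma ortho_sym x y : ortho x y = ortho y x.
Proof. by apply/orthoP/orthoP => H M MA; rewrite alt_skew // H // oppr0. Qed.

Lemma ortho_self x : ortho x x.
Proof. by apply/orthoP => M MA; apply: altA. Qed.

Lemma orthoDr x y1 y2 : ortho x y1 -> ortho x y2 -> ortho x (y1 + y2).
Proof. rewrite !(ortho_sym x); exact: orthoDl. Qed.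

Lemma orthoZr a x y : ortho x y -> ortho x (a *: y).
Proof. rewrite !(ortho_sym x); exact: orthoZl. Qed.

Definition perpv v := vspace_of (ortho v).

Lemma mem_perpv v w : (w \in perpv v) = ortho v w.
Proof.
apply: mem_vspace_of; first by rewrite ortho_sym ortho0l.
  exact: orthoDr.
by move=> a y; apply: orthoZr.
Qed.

Definition radical_in W Z :=
  (Z <= W)%VS /\ (forall z w, z \in Z -> w \in W -> ortho z w).

(* U is an isotropic space with Z <= U <= W containing every vector of W
   orthogonal to U, i.e. U is a maximal isotropic subspace of W over Z. *)
Definition rel_max W Z U :=
  [/\ (Z <= U)%VS, (U <= W)%VS, (forall u u', u \in U -> u' \in U -> ortho u u')
    & (forall w, w \in W -> (forall u, u \in U -> ortho u w) -> w \in U)].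

Lemma radical_in_perp W Z v :
  radical_in W Z -> v \in W -> radical_in (W :&: perpv v) (Z + <[v]>).
Proof.
move=> [sZW radZ] vW; split.
  rewrite subv_add !subv_cap sZW -!memvE vW mem_perpv ortho_self /= andbT.
  by apply/subvP => z zZ; rewrite mem_perpv ortho_sym radZ.
move=> x w /memv_addP[z zZ [y /vlineP[a ->] ->]] /memv_capP[wW].
by rewrite mem_perpv => vw; apply: orthoDl; [exact: radZ | exact: orthoZl].
Qed.

Lemma rel_max_perp W Z U v :
  rel_max W Z U -> v \in U -> rel_max (W :&: perpv v) (Z + <[v]>) U.
Proof.
move=> [sZU sUW isoU maxU] vU; split => //.
- by rewrite subv_add sZU -memvE.
- rewrite subv_cap sUW; apply/subvP => u uU; rewrite mem_perpv; exact: isoU.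
- by move=> w /memv_capP[wW _]; apply: maxU.
Qed.

Definition corank W v := (\dim W - \dim (W :&: perpv v))%nat.

Lemma corank_shift W Z v z : radical_in W Z -> z \in Z -> corank W (v + z) = corank W v.
Proof.
move=> [_ radZ] zZ; rewrite /corank; congr (_ - \dim _)%nat; apply/vspaceP => w.
rewrite !memv_cap !mem_perpv; case wW: (w \in W) => //=.
by rewrite orthoDl_eq //; apply: radZ.
Qed.

Lemma corank_radical W Z v : radical_in W Z -> v \in Z -> corank W v = 0%nat.
Proof.
move=> [_ radZ] vZ; rewrite /corank; suff -> : (W :&: perpv v)%VS = W by rewrite subnn.
by apply/capv_idPl/subvP => w wW; rewrite mem_perpv; apply: radZ.
Qed.

Definition perp_in W (l : seq 'cV[F]_n) :=
  foldr (fun b X => X :&: (W :&: perpv b))%VS W l.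

Lemma mem_perp_in W l w : (w \in perp_in W l) = (w \in W) && all (ortho^~ w) l.
Proof.
elim: l => [|b l IHl] /=; first by rewrite andbT.
by rewrite !memv_cap IHl mem_perpv; case: (w \in W); case: (ortho b w); case: all.
Qed.

Lemma dim_perp_in W l : (forall b, b \in l -> (\dim W <= (\dim (W :&: perpv b)).+1)%nat) ->
  (\dim W <= \dim (perp_in W l) + size l)%nat.
Proof.
elim: l => [|b l IHl] lW /=; first by rewrite addn0.
have IHl' := IHl (fun c cl => lW c (mem_behead (s := b :: l) cl)).
have bW := lW b (mem_head _ _).
set X := perp_in W l in IHl' *; set Y := (W :&: perpv b)%VS.
have := dimv_sum_cap X Y.
have : (\dim (X + Y) <= \dim W)%nat.
  apply: dimvS; rewrite subv_add capvSl andbT.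
  by apply/subvP => w; rewrite mem_perp_in => /andP[].
rewrite /Y; lia.
Qed.

Lemma rel_max_dim W Z U : radical_in W Z -> rel_max W Z U ->
  (forall v, v \in U -> (\dim W <= (\dim (W :&: perpv v)).+1)%nat) ->
  (\dim W + \dim Z <= 2 * \dim U)%nat.
Proof.
move=> [_ radZ] [sZU _ _ maxU] lowU.
set C := (U :\: Z)%VS; set bs := vbasis C.
have dimC : (\dim C + \dim Z = \dim U)%nat.
  by rewrite addnC -(dimv_cap_compl U Z) (capv_idPr sZU).
have spanC : <<bs>>%VS = C by have /andP[/eqP -> _] := vbasisP C.
have bsU b : b \in (bs : seq _) -> b \in U.
  by move=> bb; apply: (subvP (diffvSl U Z)); rewrite -/C -spanC memv_span.
have dimP := dim_perp_in (fun b bb => lowU b (bsU b bb)).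
have perpU : (perp_in W bs <= U)%VS.
  apply/subvP => w; rewrite mem_perp_in => /andP[wW /allP bs_w].
  apply: maxU => // u; rewrite -(addv_diff_cap U Z) => /memv_addP[c cC [z zZ ->]].
  apply: orthoDl; last by apply: radZ => //; exact: (subvP (capvSr U Z)).
  have : (<<bs>> <= perpv w)%VS.
    by apply/span_subvP => b bb; rewrite mem_perpv ortho_sym; apply: bs_w.
  by rewrite spanC => /subvP /(_ c cC); rewrite mem_perpv ortho_sym.
have := dimvS perpU; rewrite size_tuple in dimP; lia.
Qed.

Lemma corank0_ortho W v w : corank W v = 0%nat -> w \in W -> ortho v w.
Proof.
move=> cr0 wW; suff : w \in (W :&: perpv v)%VS by rewrite memv_cap mem_perpv => /andP[].
suff -> : (W :&: perpv v)%VS = W by [].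
by apply/eqP; rewrite eqEdim capvSl /=; move: cr0; rewrite /corank; lia.
Qed.

Definition count_bound k := forall W Z, radical_in W Z -> (\dim W - \dim Z <= k)%nat ->
  forall s, uniq s -> (forall U, U \in s -> rel_max W Z U) ->
  (size s <= #|F| ^ bound_exp k)%nat.

Definition high_corank W U := [exists v, (v \in U) && (1 < corank W v)%nat].

Section Counting.
Variables (W Z : {vspace 'cV[F]_n}) (s : seq {vspace 'cV[F]_n}).
Hypotheses (radZ : radical_in W Z) (uniq_s : uniq s).
Hypothesis sol_s : forall U, U \in s -> rel_max W Z U.

Lemma count_containing k v : count_bound k -> v \in W -> v \notin Z ->
  (\dim (W :&: perpv v) - (\dim Z).+1 <= k)%nat ->
  (count (fun U => v \in U) s <= #|F| ^ bound_exp k)%nat.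
Proof.
move=> IHk vW vZ small_v; rewrite -size_filter.
apply: IHk (W :&: perpv v)%VS (Z + <[v]>)%VS _ _ _ (filter_uniq _ uniq_s) _.
- exact: radical_in_perp.
- by rewrite dim_add_line.
- by move=> U; rewrite mem_filter => /andP[vU Us]; apply: rel_max_perp => //; apply: sol_s.
Qed.

Lemma count_trivial : (\dim W <= \dim Z)%nat -> (size s <= 1)%nat.
Proof.
move=> dimWZ; have [sZW _] := radZ.
have eZW : Z = W by apply/eqP; rewrite eqEdim sZW.
suff /(uniq_leq_size uniq_s) : {subset s <= [:: W]} by [].
move=> U Us; have [sZU sUW _ _] := sol_s Us; rewrite inE; apply/eqP.
by apply: subv_anti; rewrite sUW -eZW.
Qed.

(* A vector of W \ Z orthogonal to all of W lies in every solution. *)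
Lemma count_radical_vector k v : count_bound k -> (\dim W - \dim Z <= k.+1)%nat ->
  v \in W -> v \notin Z -> corank W v = 0%nat -> (size s <= #|F| ^ bound_exp k)%nat.
Proof.
move=> IHk small_W vW vZ cr0.
have -> : size s = count (fun U => v \in U) s.
  apply/esym/eqP; rewrite -all_count; apply/allP => U Us.
  have [_ sUW _ maxU] := sol_s Us; apply: maxU => // u uU.
  by rewrite ortho_sym; apply: (corank0_ortho cr0); apply: (subvP sUW).
apply: count_containing => //; have := dimvS (capvSl W (perpv v)); lia.
Qed.

(* Double counting pairs (v, U) with v in U of corank >= 2: each solution
   contains the whole coset v + Z of such a vector, and each such v lies in
   few solutions since it shrinks the instance by at least 3. *)
Lemma count_high k : count_bound k -> (\dim W - \dim Z <= k + 3)%nat ->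
  (size [seq U <- s | high_corank W U] <= #|F| ^ (\dim W - \dim Z + bound_exp k))%nat.
Proof.
move=> IHk small_W; have [sZW _] := radZ.
have q_gt0 : (0 < #|F|)%nat by apply: ltnW (card_finNzRing_gt1 F).
rewrite expnD -(@leq_pmul2r (#|F| ^ \dim Z)) ?expn_gt0 ?q_gt0 //.
rewrite mulnAC -expnD subnK ?dimvS // -[(#|F| ^ \dim W)%nat]card_vspace.
apply: (double_count (P := fun v => 1 < corank W v)%nat).
- by move=> U; rewrite mem_filter => /andP[_ /sol_s[]].
- move=> U; rewrite mem_filter => /andP[/existsP[v0 /andP[v0U cr_v0]] /sol_s[sZU _ _ _]].
  rewrite -card_vspace -(card_imset _ (addrI v0)); apply: subset_leq_card.
  apply/subsetP => x /imsetP[z zZ ->]; rewrite inE /=.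
  by rewrite rpredD //= ?(subvP sZU) // (corank_shift _ radZ zZ).
- move=> v vW cr_v; have vZ : v \notin Z.
    by apply: contraL cr_v => vZ; rewrite (corank_radical radZ vZ).
  have small_v : (\dim (W :&: perpv v) - (\dim Z).+1 <= k)%nat.
    by move: cr_v; rewrite /corank; lia.
  apply: leq_trans (count_containing IHk vW vZ small_v).
  by rewrite count_filter; apply: sub_count => U /andP[].
Qed.

(* Double counting pairs (v, U) with v in U \ Z: a solution without vectors of
   corank >= 2 has dimension at least (dim W + dim Z) / 2, hence many vectors
   outside Z, and each v outside Z shrinks the instance by at least 2. *)
Lemma count_low k : count_bound k -> (\dim Z < \dim W)%nat ->
  (\dim W - \dim Z <= k + 2)%nat -> (forall v, v \in W -> v \notin Z -> (0 < corank W v)%nat) ->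
  (size [seq U <- s | ~~ high_corank W U] <=
     #|F| ^ (\dim W - \dim Z - (\dim W - \dim Z + 1) %/ 2 + 1 + bound_exp k))%nat.
Proof.
move=> IHk ltZW small_W nondeg.
have q_gt1 : (1 < #|F|)%nat := card_finNzRing_gt1 F.
set c := ((\dim W - \dim Z + 1) %/ 2)%nat; set d := (\dim Z + c - 1)%nat.
have dW : (\dim W - \dim Z - c + 1 + d = \dim W)%nat by rewrite /d /c; lia.
rewrite -(@leq_pmul2r (#|F| ^ d)) ?expn_gt0 ?(ltnW q_gt1) //.
rewrite expnD mulnAC -expnD dW -[(#|F| ^ \dim W)%nat]card_vspace.
apply: (double_count (P := fun v => v \notin Z)).
- by move=> U; rewrite mem_filter => /andP[_ /sol_s[]].
- move=> U; rewrite mem_filter => /andP[lowU Us]; have solU := sol_s Us.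
  have [sZU _ _ _] := solU.
  have dimU : (\dim W + \dim Z <= 2 * \dim U)%nat.
    apply: rel_max_dim radZ solU _ => v vU.
    have : ~~ (1 < corank W v)%nat.
      by apply: contra lowU => cr_v; apply/existsP; exists v; rewrite vU.
    by have := dimvS (capvSl W (perpv v)); rewrite /corank; lia.
  apply: leq_trans (card_vspace_diff sZU _); last by lia.
  by apply: leq_pexp2l; rewrite ?(ltnW q_gt1) // /d /c; lia.
- move=> v vW vZ; have := nondeg v vW vZ.
  have := dimvS (capvSl W (perpv v)); rewrite /corank => le_perp cr_v.
  have small_v : (\dim (W :&: perpv v) - (\dim Z).+1 <= k)%nat by lia.
  apply: leq_trans (count_containing IHk vW vZ small_v).
  by rewrite count_filter; apply: sub_count => U /andP[].
Qed.

End Counting.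

Lemma all_count_bound m : count_bound m.
Proof.
elim/ltn_ind: m => m IH W Z radZ small_W s uniq_s sol_s.
have q_gt1 : (1 < #|F|)%nat := card_finNzRing_gt1 F.
have [dimWZ | ltZW] := leqP (\dim W) (\dim Z).
  by apply: leq_trans (count_trivial radZ uniq_s sol_s dimWZ) _; rewrite expn_gt0 ltnW.
have mm_pos : (1 <= \dim W - \dim Z <= m)%nat by lia.
case: (boolP [exists v, [&& v \in W, v \notin Z & corank W v == 0%nat]]).
  case/existsP => v /and3P[vW vZ /eqP cr0].
  have small_W1 : (\dim W - \dim Z <= m.-1.+1)%nat by lia.
  have IHm1 := IH m.-1 (ltac:(lia)).
  apply: leq_trans (count_radical_vector radZ uniq_s sol_s IHm1 small_W1 vW vZ cr0) _.
  by apply: leq_pexp2l; [lia | apply: bound_exp_mono; lia].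
move=> no_rad; have nondeg v : v \in W -> v \notin Z -> (0 < corank W v)%nat.
  move=> vW vZ; rewrite lt0n; apply: contra no_rad => cr0.
  by apply/existsP; exists v; rewrite vW vZ.
have high_exp := bound_exp_high mm_pos; have low_exp := bound_exp_low mm_pos.
rewrite -(count_predC (high_corank W) s) -!size_filter.
apply: leq_add_pow => //; first lia.
- have small_W3 : (\dim W - \dim Z <= m - 3 + 3)%nat by lia.
  have := count_high radZ uniq_s sol_s (IH (m - 3)%nat (ltac:(lia))) small_W3.
  move/leq_trans; apply; apply: leq_pexp2l; first lia.
  by rewrite -ltnS (ltn_predK high_exp).
- have small_W2 : (\dim W - \dim Z <= m - 2 + 2)%nat by lia.
  have := count_low radZ uniq_s sol_s (IH (m - 2)%nat (ltac:(lia))) ltZW small_W2 nondeg.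
  move/leq_trans; apply; apply: leq_pexp2l; first lia.
  by rewrite -ltnS (ltn_predK low_exp).
Qed.

Lemma max_isotropic_rel_max U : max_isotropic A U -> rel_max fullv 0 U.
Proof.
move=> [isoU maxU]; have isoU' u u' : u \in U -> u' \in U -> ortho u u'.
  by move=> uU u'U; apply/orthoP; apply: isoU.
split; [exact: sub0v | exact: subvf | exact: isoU' | move=> w _ Uw].
have isoUw : isotropic A (U + <[w]>)%VS.
  move=> x y /memv_addP[u1 u1U [x2 /vlineP[a ->] ->]].
  move=> /memv_addP[u2 u2U [y2 /vlineP[b ->] ->]]; apply/orthoP.
  apply: orthoDl; apply: orthoDr.
  - exact: isoU'.
  - by apply: orthoZr; apply: Uw.
  - by apply: orthoZl; rewrite ortho_sym; apply: Uw.
  - by apply/orthoZl/orthoZr/ortho_self.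
rewrite -(maxU _ isoUw (addvSl U <[w]>)).
by apply: (subvP (addvSr U <[w]>)); apply: memv_line.
Qed.

Lemma radical_in_full : radical_in fullv 0.
Proof. by split; [exact: sub0v | move=> z w; rewrite memv0 => /eqP -> _; exact: ortho0l]. Qed.

End Orthogonality.
End Vectors.

Local Close Scope ring_scope.

Lemma INR_expn (q e : nat) : INR (q ^ e) = pow (INR q) e.
Proof. by elim: e => [|e IHe] //=; rewrite expnS mult_INR IHe. Qed.

Lemma bound_exp_real (q n : nat) : (1 <= q)%nat ->
  Rle (INR (q ^ bound_exp n)) (Rpower (INR q) (Rplus (Rdiv (pow (INR n) 2) (INR 6)) (Rmult 2 (INR n)))).
Proof.
move=> q_ge1; have q1 : Rle 1 (INR q) by apply: (le_INR 1); apply/leP.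
have e6 : (6 * bound_exp n <= n * n + 12 * n)%coq_nat by apply/leP; rewrite /bound_exp; lia.
have := le_INR _ _ e6; rewrite mult_INR plus_INR !mult_INR => e6R.
rewrite INR_expn -Rpower_pow; last lra.
apply: Rle_Rpower => //; rewrite /= in e6R *; nra.
Qed.

Theorem theorem1p10 :
  exists C : R, Rlt 0 C /\
  forall (F : finFieldType) (n : nat), (0 < n)%N ->
  forall A : {vspace 'M[F]_n}, alt_space A ->
  forall s : seq {vspace 'cV[F]_n}, uniq s ->
    (forall U, U \in s -> max_isotropic A U) ->
    Rle (INR (size s))
        (Rpower (INR #|F|) (Rplus (Rdiv (pow (INR n) 2) (INR 6)) (Rmult C (INR n)))).
Proof.
exists 2%R; split; first lra.
move=> F n _ A altA s uniq_s max_s.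
have count_s : (size s <= #|F| ^ bound_exp n)%nat.
  apply: (all_count_bound altA (radical_in_full A)) => //.
    by rewrite dimvf dim_matrix dimv0 mulr1 subn0.
  by move=> U /max_s; apply: max_isotropic_rel_max.
apply: Rle_trans (bound_exp_real n (ltnW (card_finNzRing_gt1 F))).
by apply: le_INR; apply/leP.
Qed.
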